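(* Let $(E,\mathcal{E},\nu)$ be a $\sigma$-finite measure space, $\phi$ a Young function satisfying the $\Delta_2$-condition, $w$ a weight function, and $\Psi:E\to E$ a non-singular measurable transformation inducing a composition operator $C_\Psi f=f\circ\Psi$ on the Orlicz-Lorentz space $L_{(\phi,w)}$. Let $m\ge0$ be an integer and $\nu_m=\nu\circ\Psi^{-m}$. Then $\mathcal{N}(C_\Psi^m)=\mathcal{N}(C_\Psi^{m+1})$ if and only if the measures $\nu_m$ and $\nu_{m+1}$ are equivalent.
   Context: A Young function is a convex $\phi:[0,\infty)\to[0,\infty)$ with $\phi(x)=0\iff x=0$ and $\lim_{x\to\infty}\phi(x)=\infty$; $\Delta_2$-condition: $\phi(2x)\le k\phi(x)$ for some $k>0$ and all $x>0$. A weight function is a non-increasing locally integrable $w:(0,\infty)\to(0,\infty)$ with $\int_0^\infty w=\infty$. For measurable $f$, $\nu_f(s)=\nu\{|f|>s\}$, $f^*(t)=\inf\{s>0:\nu_f(s)\le t\}$; $L_{(\phi,w)}$ is the space of measurable $f:E\to\mathbb{C}$ with $\int_0^\infty\phi(\alpha f^*(t))w(t)\,dt<\infty$ for some $\alpha>0$, with Luxemburg norm $\|f\|=\inf\{\epsilon>0:\int_0^\infty\phi(f^*(t)/\epsilon)w(t)dt\le1\}$. $\Psi$ non-singular means $\nu(\Psi^{-1}(S))=0$ whenever $\nu(S)=0$. $\nu\circ\Psi^{-m}(S)=\nu(\Psi^{-m}(S))$, $\Psi^0=\mathrm{id}$. Two measures $\nu_1,\nu_2$ are equivalent if $\nu_1\ll\nu_2\ll\nu_1$.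 $\mathcal{N}(T)$ is the kernel of $T$; $C_\Psi^m f=f\circ\Psi^m$. *)

From HB Require Import structures.
From mathcomp Require Import all_boot all_order all_algebra.
From mathcomp Require Import all_classical all_reals all_analysis.
From mathcomp Require complex.
Set Implicit Arguments. Unset Strict Implicit. Unset Printing Implicit Defensive.
Import Order.TTheory GRing.Theory Num.Theory.
Local Open Scope classical_set_scope.
Local Open Scope ring_scope.

Notation Cx R := (complex.complex R).

Section OL.
Context {R : realType}.

Definition cmod (z : Cx R) : R :=
  Num.sqrt (complex.Re z ^+ 2 + complex.Im z ^+ 2).

(* Young function phi : [0,oo) -> [0,oo) (values of phi on negatives irrelevant) *)
Definition young_function (phi : R -> R) : Prop :=
  [/\ (forall x, 0 <= x -> 0 <= phi x),
      (forall x y t, 0 <= x -> 0 <= y -> 0 <= t <= 1 ->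
         phi (t * x + (1 - t) * y) <= t * phi x + (1 - t) * phi y),
      (forall x, 0 <= x -> (phi x = 0 <-> x = 0)) &
      phi x @[x --> +oo] --> +oo].

Definition delta2 (phi : R -> R) : Prop :=
  exists k : R, 0 < k /\ forall x, 0 < x -> phi (2 * x) <= k * phi x.

Definition weight_function (w : R -> R) : Prop :=
  [/\ (forall t, 0 < t -> 0 < w t),
      (forall s t, 0 < s -> s <= t -> w t <= w s),
      (forall t, 0 < t -> (@lebesgue_measure R).-integrable `]0, t] (EFin \o w)) &
      (\int[@lebesgue_measure R]_(t in [set t : R | (0 < t)%R]) (w t)%:E = +oo)%E].

Definition phiE (phi : R -> R) (x : \bar R) : \bar R :=
  match x with
  | EFin r => (phi r)%:E
  | +oo%E => +oo%E
  | -oo%E => 0%E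
  end.

Context {d : measure_display} {T : measurableType d}.

Definition cmeasurable (f : T -> Cx R) : Prop :=
  measurable_fun setT (fun x => complex.Re (f x)) /\
  measurable_fun setT (fun x => complex.Im (f x)).

Definition distrib (nu : {measure set T -> \bar R}) (f : T -> Cx R) (s : R)
  : \bar R := nu [set x | s < cmod (f x)].

Definition rearr (nu : {measure set T -> \bar R}) (f : T -> Cx R) (t : R)
  : \bar R := ereal_inf [set s%:E | s in [set s : R | 0 < s /\ (distrib nu f s <= t%:E)%E]].

Definition OL_modular (phi w : R -> R) (nu : {measure set T -> \bar R})
  (f : T -> Cx R) (alpha : R) : \bar R :=
  (\int[@lebesgue_measure R]_(t in [set t : R | (0 < t)%R])
      (phiE phi (alpha%:E * rearr nu f t) * (w t)%:E))%E.

Definition in_OL (phi w : R -> R) (nu : {measure set T -> \bar R})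
  (f : T -> Cx R) : Prop :=
  cmeasurable f /\ exists alpha : R, 0 < alpha /\ (OL_modular phi w nu f alpha < +oo)%E.

(* kernel of C_Psi^m on L_(phi,w): f in L with f o Psi^m = 0 in L, i.e. nu-a.e. *)
Definition in_kernel_comp (phi w : R -> R) (nu : {measure set T -> \bar R})
  (Psi : T -> T) (m : nat) (f : T -> Cx R) : Prop :=
  in_OL phi w nu f /\ nu.-negligible [set x | f (iter m Psi x) <> complex.Complex 0 0].

Definition push_iter (nu : {measure set T -> \bar R}) (Psi : T -> T) (m : nat)
  (S : set T) : \bar R := nu (iter m Psi @^-1` S).

Definition abs_cont (mu1 mu2 : set T -> \bar R) : Prop :=
  forall S, measurable S -> mu2 S = 0%E -> mu1 S = 0%E.

Definition equiv_measures (mu1 mu2 : set T -> \bar R) : Prop :=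
  abs_cont mu1 mu2 /\ abs_cont mu2 mu1.

Definition nonsingular (nu : {measure set T -> \bar R}) (Psi : T -> T) : Prop :=
  forall S, measurable S -> nu S = 0%E -> nu (Psi @^-1` S) = 0%E.

End OL.

From HB Require Import structures.
From mathcomp Require Import all_boot all_order all_algebra.
From mathcomp Require Import all_classical all_reals all_analysis.
From mathcomp Require Import measurable_realfun.
Set Implicit Arguments.
Unset Strict Implicit.
Unset Printing Implicit Defensive.
Import Order.TTheory GRing.Theory Num.Theory.
Local Open Scope classical_set_scope.
Local Open Scope ring_scope.

(* An f in L_(phi,w) lies in the kernel of C_Psi^k exactly when its support
   {f <> 0}, a measurable set, is nu_k-null; hence N(C_Psi^k) is contained in
   N(C_Psi^n) as soon as nu_n << nu_k. Conversely, indicators of sets of finite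
   measure belong to L_(phi,w), so by sigma-finiteness an inclusion of kernels
   forces nu_n << nu_k. Non-singularity of Psi always gives nu_(m+1) << nu_m,
   so the kernels of C_Psi^m and C_Psi^(m+1) coincide iff nu_m << nu_(m+1). *)

Lemma preimage_iterS (T : Type) (Psi : T -> T) n (S : set T) :
  iter n.+1 Psi @^-1` S = Psi @^-1` (iter n Psi @^-1` S).
Proof. by apply/funext => x; rewrite /preimage /= -iterS iterSr. Qed.

Lemma measurableT_preimage d d' (T : measurableType d) (U : measurableType d')
  (g : T -> U) (S : set U) :
  measurable_fun setT g -> measurable S -> measurable (g @^-1` S).
Proof. by move=> mg mS; rewrite -[_ @^-1` _]setTI; exact: mg. Qed.

Lemma measurable_fun_iter d (T : measurableType d) (Psi : T -> T) n :
  measurable_fun setT Psi -> measurable_fun setT (iter n Psi).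
Proof.
move=> mPsi; elim: n => [|n IHn] /=; first exact: measurable_id.
exact: measurableT_comp.
Qed.

Section young_function.
Context {R : realType} (phi : R -> R).
Hypothesis yphi : young_function phi.

Lemma young_function_ge0 x : 0 <= x -> 0 <= phi x.
Proof. by case: yphi => phi0 _ _ _; exact: phi0. Qed.

Lemma young_function0 : phi 0 = 0.
Proof. by case: yphi => _ _ phiz _; apply/phiz. Qed.

Lemma young_functionZ_le t x : 0 <= t <= 1 -> 0 <= x -> phi (t * x) <= t * phi x.
Proof.
case: yphi => _ phic _ _ t01 x0.
have := phic x 0 t x0 (lexx 0) t01.
by rewrite mulr0 addr0 young_function0 mulr0 addr0.
Qed.

Lemma young_function_le x y : 0 <= x -> x <= y -> phi x <= phi y.
Proof.
move=> x0 xy; have y0 := le_trans x0 xy.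
have [y_eq0|y_neq0] := eqVneq y 0.
  by have -> : x = y by apply/eqP; rewrite eq_le xy y_eq0 x0.
have y_gt0 : 0 < y by rewrite lt_neqAle eq_sym y_neq0.
have t01 : 0 <= x / y <= 1 by rewrite divr_ge0 //= ler_pdivrMr ?mul1r.
rewrite -[x](divfK y_neq0); apply: le_trans (young_functionZ_le t01 y0) _.
by apply: ler_piMl; [exact: young_function_ge0 | case/andP: t01].
Qed.

End young_function.

(* Unlike [ge0_le_integral], no measurability is needed: the integral of a
   nonnegative function is the supremum of the integrals of simple functions
   below it. *)
Lemma ge0_le_integral_nonmeasurable d (T : measurableType d) (R : realType)
  (mu : {measure set T -> \bar R}) (D : set T) (f g : T -> \bar R) :
  (forall x, D x -> (0 <= f x)%E) -> (forall x, D x -> (f x <= g x)%E) ->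
  (\int[mu]_(x in D) f x <= \int[mu]_(x in D) g x)%E.
Proof.
move=> f0 fg; rewrite !ge0_integralE //; last first.
  by move=> x Dx; exact: le_trans (f0 x Dx) (fg x Dx).
apply: ereal_sup_le => _ [h hf <-]; exists h => // x; apply: le_trans (hf x) _.
by rewrite !patchE; case: ifP => // /set_mem /fg.
Qed.

Section complex_indicator.
Context {R : realType} {d : measure_display} {T : measurableType d}.

Definition csupport (f : T -> Cx R) : set T := [set x | f x <> complex.Complex 0 0].

Lemma cmeasurable_csupport f : cmeasurable f -> measurable (csupport f).
Proof.
move=> [mRe mIm].
have -> : csupport f = ((fun x => complex.Re (f x)) @^-1` [set~ 0]) `|`
                       ((fun x => complex.Im (f x)) @^-1` [set~ 0]).
  apply/seteqP; split => x; rewrite /csupport /=; case: (f x) => a b /=.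
    by move=> fx_neq0; apply/not_andP => -[a0 b0]; apply: fx_neq0; rewrite a0 b0.
  by case=> ab_neq0 [a0 b0]; apply: ab_neq0.
by apply: measurableU; apply: measurableT_preimage => //;
  exact: measurableC (measurable_set1 _).
Qed.

Definition cindic (A : set T) : T -> Cx R := fun x => complex.Complex (\1_A x) 0.

Lemma cmeasurable_cindic A : measurable A -> cmeasurable (cindic A).
Proof. by move=> mA; split; [exact: measurable_indic | exact: measurable_cst]. Qed.

Lemma cmod_cindic A x : cmod (cindic A x) = \1_A x.
Proof.
rewrite /cmod /cindic /= indicE expr0n /= addr0.
by case: (x \in A); rewrite /= ?expr1n ?sqrtr1 ?expr0n ?sqrtr0.
Qed.

Lemma csupport_cindic A : csupport (cindic A) = A.
Proof.
apply/seteqP; split => x; rewrite /csupport /cindic /= indicE.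
  by case: (boolP (x \in A)) => [/set_mem //|_].
by move=> Ax; rewrite (mem_set Ax) => -[] /eqP; rewrite oner_eq0.
Qed.

Variable nu : {measure set T -> \bar R}.

Lemma distrib_cindic A s : 0 < s ->
  distrib nu (cindic A) s = if s < 1 then nu A else 0%E.
Proof.
move=> s_gt0; rewrite /distrib; under eq_set do rewrite cmod_cindic indicE.
case: ifP => s1.
  congr (nu _); apply/seteqP; split => x /=.
    by case: (boolP (x \in A)) => [/set_mem //|_]; rewrite ltNge (ltW s_gt0).
  by move=> Ax; rewrite (mem_set Ax).
rewrite (_ : [set _ | _] = set0) ?measure0 //; apply/seteqP; split => x //=.
by case: (x \in A); rewrite /= ?s1 // ltNge (ltW s_gt0).
Qed.

Lemma rearr_cindic_01 A t : 0 < t ->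
  exists2 r, rearr nu (cindic A) t = r%:E & 0 <= r <= 1.
Proof.
move=> t_gt0.
have ge0 : (0 <= rearr nu (cindic A) t)%E.
  by apply: le_ereal_inf_tmp => _ [s [s_gt0 _] <-]; rewrite lee_fin ltW.
have le1 : (rearr nu (cindic A) t <= 1%:E)%E.
  apply: ge_ereal_inf; exists 1%:E => //; exists 1 => //; split => //.
  by rewrite distrib_cindic // ltxx lee_fin ltW.
have fin : rearr nu (cindic A) t \is a fin_num.
  by rewrite ge0_fin_numE // (le_lt_trans le1) // ltey.
exists (fine (rearr nu (cindic A) t)); first by rewrite fineK.
by rewrite fine_ge0 //= -lee_fin fineK.
Qed.

Lemma rearr_cindic_eq0 A t : 0 < t -> (nu A <= t%:E)%E ->
  rearr nu (cindic A) t = 0%E.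
Proof.
move=> t_gt0 nuA_le; apply/eqP; rewrite eq_le; apply/andP; split; last first.
  by apply: le_ereal_inf_tmp => _ [s [s_gt0 _] <-]; rewrite lee_fin ltW.
apply/lee_addgt0Pr => e e_gt0; rewrite add0e; apply: ge_ereal_inf.
exists e%:E => //; exists e => //; split => //; rewrite distrib_cindic //.
by case: ifP => // _; rewrite lee_fin ltW.
Qed.

(* The rearrangement is at most 1 and vanishes beyond [nu A], so the modular
   of [cindic A] is at most [phi 1 * \int_0^(nu A + 1) w]. *)
Lemma in_OL_cindic phi w A : young_function phi -> weight_function w ->
  measurable A -> (nu A < +oo)%E -> in_OL phi w nu (cindic A).
Proof.
move=> yphi [w_gt0 _ w_int _] mA nuA_lty.
split; first exact: cmeasurable_cindic.
exists 1; split => //; rewrite /OL_modular.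
have nuA_fin : nu A \is a fin_num by rewrite ge0_fin_numE.
set b := fine (nu A) + 1.
have b_gt0 : 0 < b by rewrite ltr_wpDl // fine_ge0.
set I := `]0, b]%classic.
have integrand_le t : 0 < t -> (0 <= phiE phi (1%:E * rearr nu (cindic A) t) * (w t)%:E
                                  <= ((fun t => (phi 1 * w t)%:E) \_ I) t)%E.
  move=> t_gt0; have [r rE /andP[r0 r1]] := rearr_cindic_01 A t_gt0.
  have w_ge0 := ltW (w_gt0 _ t_gt0).
  rewrite rE mul1e /= -EFinM lee_fin mulr_ge0 ?(young_function_ge0 yphi r0) //=.
  rewrite patchE; case: ifP => [_|t_notin].
    by rewrite lee_fin ler_wpM2r ?(young_function_le yphi r0 r1).
  suff -> : r = 0 by rewrite (young_function0 yphi) mul0r.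
  have b_lt_t : b < t.
    rewrite ltNge; apply/negP => t_le; move/negP: t_notin; apply.
    by rewrite inE /I /= in_itv /= t_gt0 t_le.
  have /(rearr_cindic_eq0 t_gt0) : (nu A <= t%:E)%E.
    by rewrite -(fineK nuA_fin) lee_fin (le_trans _ (ltW b_lt_t)) // lerDl.
  by rewrite rE => -[].
have le_int := ge0_le_integral_nonmeasurable lebesgue_measure (D := [set t | 0 < t])
  (fun t t_gt0 => (andP (integrand_le t t_gt0)).1)
  (fun t t_gt0 => (andP (integrand_le t t_gt0)).2).
apply: le_lt_trans le_int _.
rewrite -integral_mkcondr setIidr; last by move=> t; rewrite /I /= in_itv /= => /andP[].
under eq_integral do rewrite EFinM.
apply: integrable_lty; first exact: measurable_itv.
by apply: integrableZl; [exact: measurable_itv | exact: w_int].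
Qed.

End complex_indicator.

Section kernel_comp.
Context {R : realType} {d : measure_display} {T : measurableType d}.
Variables (nu : {measure set T -> \bar R}) (phi w : R -> R) (Psi : T -> T).
Hypothesis mPsi : measurable_fun setT Psi.

Local Notation K := (in_kernel_comp phi w nu Psi).
Local Notation nu_ := (push_iter nu Psi).

Let measurable_preimage_iter n S : measurable S -> measurable (iter n Psi @^-1` S).
Proof. exact/measurableT_preimage/measurable_fun_iter. Qed.

Lemma in_kernel_compE n f :
  K n f <-> in_OL phi w nu f /\ nu_ n (csupport f) = 0%E.
Proof.
have mS (fL : in_OL phi w nu f) : measurable (iter n Psi @^-1` csupport f).
  exact/measurable_preimage_iter/cmeasurable_csupport/fL.1.
by split=> -[fL f0]; split=> //; apply/(negligibleP _ (mS fL)).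
Qed.

Lemma abs_cont_push_iterS n : nonsingular nu Psi -> abs_cont (nu_ n.+1) (nu_ n).
Proof.
move=> ns S mS; rewrite /push_iter preimage_iterS.
exact/ns/measurable_preimage_iter.
Qed.

Hypotheses (sfin : sigma_finite setT nu) (yphi : young_function phi)
  (wgt : weight_function w).

Lemma subset_kernel_comp_abs_cont n k :
  (forall f, K k f -> K n f) <-> abs_cont (nu_ n) (nu_ k).
Proof.
split=> [Kkn S mS nuk_S|nu_nk f /in_kernel_compE[fL f0]]; last first.
  by apply/in_kernel_compE; split => //; exact: nu_nk (cmeasurable_csupport fL.1) f0.
have [F FT Ffin] := sfin.
rewrite /push_iter; apply/(negligibleP _ (measurable_preimage_iter n mS)).
have -> : iter n Psi @^-1` S = \bigcup_i iter n Psi @^-1` (S `&` F i).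
  by rewrite -preimage_bigcup -setI_bigcupr -FT setIT.
apply: negligible_bigcup => i; have [mFi Fi_lty] := Ffin i.
have mSF : measurable (S `&` F i) by exact: measurableI.
have K_SF : K k (cindic (S `&` F i)).
  apply/in_kernel_compE; split.
    apply: (in_OL_cindic yphi wgt mSF); apply: le_lt_trans Fi_lty.
    by apply: le_measure; rewrite ?inE //; exact: subIsetr.
  rewrite csupport_cindic; apply/eqP; rewrite eq_le measure_ge0 andbT -nuk_S.
  by apply: le_measure; rewrite ?inE; [exact: measurable_preimage_iter.. | move=> x []].
have /in_kernel_compE[_] := Kkn _ K_SF.
by rewrite csupport_cindic => /(negligibleP _ (measurable_preimage_iter n mSF)).
Qed.

End kernel_comp.

Theorem lemma3p2 (R : realType) (d : measure_display) (T : measurableType d)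
  (nu : {measure set T -> \bar R}) (phi w : R -> R) (Psi : T -> T) (m : nat) :
  sigma_finite setT nu ->
  young_function phi -> delta2 phi -> weight_function w ->
  measurable_fun setT Psi -> nonsingular nu Psi ->
  (forall f : T -> Cx R, in_OL phi w nu f -> in_OL phi w nu (f \o Psi)) ->
  ((forall f : T -> Cx R,
      in_kernel_comp phi w nu Psi m f <-> in_kernel_comp phi w nu Psi m.+1 f)
   <-> equiv_measures (push_iter nu Psi m) (push_iter nu Psi m.+1)).
Proof.
move=> sfin yphi _ wgt mPsi ns _.
have subE n k := subset_kernel_comp_abs_cont mPsi sfin yphi wgt n k.
have /subE K_incr := abs_cont_push_iterS mPsi (n := m) ns.
rewrite /equiv_measures -!subE.
split=> [Keq | [K_decr _] f]; first by split=> f /Keq.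
by split; [exact: K_incr | exact: K_decr].
Qed.
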